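(* Let $m_0>0$ be the constant (depending only on $\mu,\Delta_0,\lambda_0$) for which, for every $k\in\mathbb N$, finite interval $\Lambda$, $\ell\in\mathbb N$ and nonempty $S_1,\dots,S_{k+1}\subset\Lambda$ with pairwise distances $\ge2\ell+1$, one has $\mathbb E\|P^\Lambda_{I_{\le k}}\prod_{i}P_-^{S_i}\|\le C_k\max_i\Upsilon_{S_i}|\Lambda|^{2k+1}e^{-m_0\ell}$. Let $\Lambda\subset\mathbb Z$ be a finite interval, $T$ an observable supported on an interval $\mathcal X\subset\Lambda$ with $\|T\|\le1$, $k,\ell\in\mathbb N$, and assume $\operatorname{dist}(\mathcal X,\mathbb Z\setminus\Lambda)>9(k+1)\ell+1$. For $j=1,\dots,k+1$ define $$T_j=T\,P_+^{\partial_{3\ell}[\mathcal X]^\Lambda_{9j\ell}}\prod_{i=1}^{j-1}P_-^{\partial_{3\ell}[\mathcal X]^\Lambda_{9i\ell}}$$ (empty product $=I$). Then $$T_j=P_+^{\partial_{3\ell}[\mathcal X]^\Lambda_{9j\ell}}T_jP_+^{\partial_{3\ell}[\mathcal X]^\Lambda_{9j\ell}}=P_+^{\partial^{out}_{3\ell}[\mathcal X]^\Lambda_{9j\ell}}\otimes P_+^{\partial^{in}_{3\ell}[\mathcal X]^\Lambda_{9j\ell}}\otimes T\prod_{i=1}^{j-1}P_-^{\partial_{3\ell}[\mathcal X]^\Lambda_{9i\ell}},$$ $T_j$ is supported in $[\mathcal X]^\Lambda_{(9j+3)\ell}$, $T\prod_{i=1}^{j-1}P_-^{\partial_{3\ell}[\mathcal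 X]^\Lambda_{9i\ell}}$ is supported in $[\mathcal X]^\Lambda_{(9j-6)\ell}$, and $$\mathbb E\Big\|\Big(T-\sum_{j=1}^{k+1}T_j\Big)_{P^\Lambda_{I_{\le k}}}\Big\|\le C_k|\Lambda|^{2k+1}e^{-m_0\ell}.$$
   Context: Spin chain setup. For $i\in\mathbb Z$ let $\mathcal H_i$ be a copy of $\mathbb C^2$; $\sigma^x,\sigma^y,\sigma^z$ Pauli matrices, $\sigma^\pm=\frac12(\sigma^x\pm i\sigma^y)$, $\mathcal N=\frac12(I-\sigma^z)$, subscript $i$ = action on $\mathcal H_i$. For finite $\Lambda\subset\mathbb Z$, $\mathcal H_\Lambda=\bigotimes_{i\in\Lambda}\mathcal H_i$; operators on $\mathcal H_S$, $S\subset\Lambda$, are identified with $T\otimes I_{\mathcal H_{\Lambda\setminus S}}$, and an observable is supported in $S$ if of this form. $H^\Lambda=\sum_{\{i,i+1\}\subset\Lambda}h_{i,i+1}+\sum_{i\in\Lambda}\mathcal N_i+\lambda\sum_{i\in\Lambda}\omega_i\mathcal N_i$, $h_{i,i+1}=-\mathcal N_i\mathcal N_{i+1}-\frac1{2\Delta}(\sigma_i^+\sigma_{i+1}^-+\sigma_i^-\sigma_{i+1}^+)$, $\Delta>1$, $\lambda>0$, $\{\omega_i\}$ i.i.d. with law $\mu$ absolutely continuous with bounded density, $\{0,1\}\subset\operatorname{supp}\mu\subset[0,1]$; $\mathbb E$ = expectation. Standing: $\Delta\ge\Delta_0>9$, $\lambda\ge\lambda_0>0$; constants depend on $\mu,\Delta_0,\lambda_0,k$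 only. Notation: $P_+^S=\bigotimes_{i\in S}(I-\mathcal N_i)$, $P_-^S=I-P_+^S$. $\Upsilon_S$ = number of maximal subintervals of $S$. $\operatorname{dist}_\Lambda(x,y)=|x-y|$. For $M\subset\Lambda$, $s\in\mathbb N_0$: $[M]^\Lambda_s=\{x\in\Lambda:\operatorname{dist}(x,M)\le s\}$; for $s\in\mathbb N$: $\partial^{out}_sM=[M]^\Lambda_s\setminus M$, $\partial^{in}_sM=\{x\in M:\operatorname{dist}(x,\Lambda\setminus M)\le s\}$, $\partial_sM=\partial^{in}_sM\cup\partial^{out}_sM$. $P^\Lambda_I=\chi_I(H^\Lambda)$, $(T)_Y=YTY^*$, $I_{\le k}=(-\infty,(k+\frac34)(1-\frac1\Delta)]$. *)

From HB Require Import structures.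
From mathcomp Require Import all_boot all_order all_algebra.
From mathcomp Require Import spectral sesquilinear.
From mathcomp.real_closed Require Import complex.
From mathcomp Require Import all_classical all_reals all_analysis.


Unset Strict Implicit.
Unset Printing Implicit Defensive.

Import Order.TTheory GRing.Theory Num.Theory Num.Def.
Import numFieldNormedType.Exports.
Local Open Scope ring_scope.

(* Sites.  A finite interval Lambda = {a, a+1, ..., a+n-1} of Z is encoded    *)
(* by its left end a : int and its cardinality n.  Subsets of Z are boolean   *)
(* predicates int -> bool.  The Hilbert space H_Lambda = (C^2)^{(x) n} is     *)
(* C^(2^n); the basis vector with index x : 'I_(2^n) has, at site a+j        *)
(* (j < n), the C^2 basis vector e_(bit x j), where bit x j is the j-th      *)
(* binary digit of x.  e_0 = (1,0), e_1 = (0,1) (standard basis of C^2).     *)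

Definition zdist (x y : int) : nat := absz (x - y).

Definition inL (a : int) (n : nat) (x : int) : bool := (a <= x) && (x < a + n%:Z).

(* [M]^Lambda_s = { x in Lambda : dist(x, M) <= s }  (M a subset of Lambda) *)
Definition nbhd (a : int) (n : nat) (M : int -> bool) (s : nat) : int -> bool :=
  fun x => inL a n x && [exists j : 'I_n, M (a + (j : nat)%:Z) && (zdist x (a + (j : nat)%:Z) <= s)%N].

Definition bd_out (a : int) (n : nat) (M : int -> bool) (s : nat) : int -> bool :=
  fun x => nbhd a n M s x && ~~ M x.

Definition bd_in (a : int) (n : nat) (M : int -> bool) (s : nat) : int -> bool :=
  fun x => M x && [exists j : 'I_n, ~~ M (a + (j : nat)%:Z) && (zdist x (a + (j : nat)%:Z) <= s)%N].

Definition bd (a : int) (n : nat) (M : int -> bool) (s : nat) : int -> bool :=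
  fun x => bd_in a n M s x || bd_out a n M s x.

(* Upsilon_S : number of maximal subintervals of S (S a subset of Lambda),   *)
(* counted as the number of left end points of such intervals.              *)
Definition Upsilon (a : int) (n : nat) (S : int -> bool) : nat :=
  #|[set j : 'I_n | S (a + (j : nat)%:Z) && ~~ S (a + (j : nat)%:Z - 1)]|.

Section Ops.
Variable R : realType.
Local Notation C := (R[i]).

Definition bit {N : nat} (x : 'I_N) (j : nat) : bool := odd (x %/ 2 ^ j).

Definition b2o (b : bool) : 'I_2 := inord (nat_of_bool b).

(* the operator A on H_{a+j} (site a+j of Lambda), i.e. A (x) I *)
Definition site_op (n : nat) (j : nat) (A : 'M[C]_2) : 'M[C]_(2 ^ n) :=
  \matrix_(x, y) (A (b2o (bit x j)) (b2o (bit y j)) *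
      ([forall k : 'I_n, ((k : nat) != j) ==> (bit x k == bit y k)])%:R).

Definition sigx : 'M[C]_2 := \matrix_(i, j) (if i == j then 0 else 1).
Definition sigy : 'M[C]_2 :=
  \matrix_(i, j) (if i == j then 0 else if (i : nat) == 0%N then - 'i%C else 'i%C).
Definition sigz : 'M[C]_2 :=
  \matrix_(i, j) (if i == j then (if (i : nat) == 0%N then 1 else -1) else 0).
Definition sigp : 'M[C]_2 := 2%:R^-1 *: (sigx + 'i%C *: sigy).
Definition sigm : 'M[C]_2 := 2%:R^-1 *: (sigx - 'i%C *: sigy).
Definition Nmat : 'M[C]_2 := 2%:R^-1 *: (1%:M - sigz).

Definition Pplus (a : int) (n : nat) (S : int -> bool) : 'M[C]_(2 ^ n) :=
  \prod_(j < n | S (a + (j : nat)%:Z)) site_op n j (1%:M - Nmat).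
Definition Pminus (a : int) (n : nat) (S : int -> bool) : 'M[C]_(2 ^ n) :=
  1%:M - Pplus a n S.

(* T is supported in S: T = T' (x) I_{H_{Lambda \ S}} for some operator T'  *)
(* on H_S; T' is given by its matrix F on the configurations of S (maps     *)
(* from sites to bits, set to false off S).                                 *)
Definition agree_off (a : int) (n : nat) (S : int -> bool) (x y : 'I_(2 ^ n)) : bool :=
  [forall j : 'I_n, ~~ S (a + (j : nat)%:Z) ==> (bit x j == bit y j)].
Definition restr (a : int) (n : nat) (S : int -> bool) (x : 'I_(2 ^ n)) : nat -> bool :=
  fun j => ((j < n)%N && S (a + j%:Z)) && bit x j.
Definition supported (a : int) (n : nat) (S : int -> bool) (T : 'M[C]_(2 ^ n)) : Prop :=
  exists F : (nat -> bool) -> (nat -> bool) -> C,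
    forall x y, T x y = F (restr a n S x) (restr a n S y) * (agree_off a n S x y)%:R.

(* Hamiltonian H^Lambda, with omega_{a+j} = om j *)
Definition hterm (n : nat) (Delta : R) (j : nat) : 'M[C]_(2 ^ n) :=
  - (site_op n j Nmat *m site_op n j.+1 Nmat)
  - (2%:R * Delta)^-1%:C%C *: (site_op n j sigp *m site_op n j.+1 sigm
                                + site_op n j sigm *m site_op n j.+1 sigp).
Definition Ham (n : nat) (Delta lambda : R) (om : nat -> R) : 'M[C]_(2 ^ n) :=
  \sum_(0 <= j < n.-1) hterm n Delta j
  + \sum_(j < n) site_op n j Nmat
  + lambda%:C%C *: \sum_(j < n) (om j)%:C%C *: site_op n j Nmat.

(* Spectral projection chi_{(-oo, c]}(A) for a normal (here Hermitian)       *)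
(* matrix A = P^-1 diag(d) P with P unitary (spectral theorem, spectral.v).  *)
Definition specproj_le {N : nat} (A : 'M[C]_N) (c : R) : 'M[C]_N :=
  invmx (spectralmx A) *m
    diag_mx (\row_i (((spectral_diag A 0 i <= c%:C%C)%R : bool)%:R)) *m spectralmx A.

(* adjoint, (T)_Y = Y T Y^* *)
Definition adj {N : nat} (A : 'M[C]_N) : 'M[C]_N := (map_mx conjC A)^T.
Definition conjby {N : nat} (Y T : 'M[C]_N) : 'M[C]_N := Y *m T *m adj Y.

Definition cabs (z : C) : R := complex.Re `|z|.
Definition vnorm {N : nat} (v : 'cV[C]_N) : R := Num.sqrt (\sum_i cabs (v i 0) ^+ 2).
Definition opnorm {N : nat} (A : 'M[C]_N) : R :=
  sup [set vnorm (A *m v) | v in [set v : 'cV[C]_N | vnorm v <= 1]].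

(* I_{<= k} = (-oo, (k + 3/4)(1 - 1/Delta)] *)
Definition Ik (k : nat) (Delta : R) : R := (k%:R + 3%:R / 4%:R) * (1 - Delta^-1).

(* Expectation over omega_{a}, ..., omega_{a+n-1} i.i.d. with law mu, as an *)
(* iterated integral (nonnegative integrands; = product-measure integral by *)
(* Tonelli).                                                                *)
Fixpoint Eiid (mu : probability R R) (n : nat) (f : (nat -> R) -> \bar R) : \bar R :=
  match n with
  | 0%N => f (fun _ => 0)
  | n'.+1 => (\int[mu]_x Eiid mu n' (fun w => f (fun i => if i == 0%N then x else w i.-1)))%E
  end.

Definition msupp (mu : probability R R) : set R :=
  [set x | forall e : R, 0 < e -> (0 < mu (ball x e))%E].

Definition good_law (mu : probability R R) : Prop :=
  (exists (f : R -> R) (M : R),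
      measurable_fun [set: R] f /\ (forall x, 0 <= f x <= M) /\
      forall A : set R, measurable A ->
        mu A = (\int[lebesgue_measure]_(x in A) (f x)%:E)%E)
  /\ msupp mu 0 /\ msupp mu 1
  /\ (forall x, msupp mu x -> 0 <= x <= 1).

End Ops.

Arguments bit {N} x j.
Arguments site_op {R} n j A.
Arguments sigx {R}. Arguments sigy {R}. Arguments sigz {R}.
Arguments sigp {R}. Arguments sigm {R}. Arguments Nmat {R}.
Arguments Pplus {R} a n S. Arguments Pminus {R} a n S.
Arguments agree_off a n S x y. Arguments restr a n S x _.
Arguments supported {R} a n S T.
Arguments hterm {R} n Delta j. Arguments Ham {R} n Delta lambda om.
Arguments specproj_le {R N} A c. Arguments adj {R N} A. Arguments conjby {R N} Y T.
Arguments cabs {R} z. Arguments vnorm {R N} v. Arguments opnorm {R N} A.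
Arguments Ik {R} k Delta. Arguments Eiid {R} mu n f. Arguments msupp {R} mu _.
Arguments good_law {R} mu.

From HB Require Import structures.
From mathcomp Require Import all_boot all_order all_algebra.
From mathcomp Require Import spectral sesquilinear.
From mathcomp.real_closed Require Import complex.
From mathcomp Require Import all_classical all_reals all_analysis.
From mathcomp Require Import zify.
Import Order.TTheory GRing.Theory Num.Theory Num.Def.
Import numFieldNormedType.Exports.
Local Open Scope ring_scope.

(* The shell projections P_+^(shell j), where shell j is the 3l-boundary of
   [X]_{9jl}, are diagonal in the occupation basis, so they commute with each
   other, and as the shells avoid X they commute with T.  Writing Pbelow j for
   the product of the P_-^(shell i), i < j, we get
   T_j = T Pbelow j - T Pbelow (j + 1), so the sum of the T_j telescopes to
   T - T Pbelow (k + 2).  Conjugating by the spectral projection P, a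
   self-adjoint contraction, leaves P Pbelow (k + 2) T P, of norm at most
   ||P Pbelow (k + 2)||.  The shells are nonempty, pairwise at distance
   >= 2l + 1 and have at most three maximal subintervals, so the assumed
   localization bound applies with C_k = 3 |C'_k|; if X is empty, so is the
   first shell, and Pbelow (k + 2) = 0. *)

Set Implicit Arguments.
Unset Strict Implicit.

Lemma bit_inj_nat n (x y : nat) : (x < 2 ^ n)%N -> (y < 2 ^ n)%N ->
  (forall k, (k < n)%N -> odd (x %/ 2 ^ k) = odd (y %/ 2 ^ k)) -> x = y.
Proof.
elim: n x y => [|n IH] x y.
  by rewrite expn0 !ltnS !leqn0 => /eqP -> /eqP ->.
move=> hx hy hb.
rewrite (divn_eq x 2) (divn_eq y 2) !modn2.
have h0 := hb 0%N isT; rewrite !expn0 !divn1 in h0.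
rewrite h0; congr (_ * _ + _)%N.
apply: IH; rewrite ?ltn_divLR // -?expnSr //.
move=> k hk; have := hb k.+1; rewrite ltnS => /(_ hk).
by rewrite !expnS !divnMA.
Qed.

Lemma bit_inj n (x y : 'I_(2 ^ n)) :
  (forall k : 'I_n, bit x k = bit y k) -> x = y.
Proof.
move=> h; apply/val_inj/(@bit_inj_nat n); rewrite ?ltn_ord //.
by move=> k kn; have := h (Ordinal kn).
Qed.

Lemma b2o_inj : injective b2o.
Proof. by move=> [] [] //; rewrite /b2o => /(congr1 val); rewrite /= !inordK. Qed.

Section OccupationBasis.
Variable R : realType.
Local Notation C := (R[i]).

Lemma subN_Nmat (i j : 'I_2) :
  (1%:M - @Nmat R) i j = ((i == j) && ((i : nat) == 0%N))%:R.
Proof.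
rewrite /Nmat /sigz !mxE.
case: i => [[|[|i]] hi] //; case: j => [[|[|j]] hj] //=; rewrite ?mulr1n ?mulr0n.
all: try by rewrite subrr mulr0 subr0.
have -> : (1 - - 1 : C) = 2%:R by rewrite opprK.
by rewrite mulVf ?subrr ?pnatr_eq0.
Qed.

Lemma site_op_subN_Nmat n j :
  site_op n j (1%:M - @Nmat R) = diag_mx (\row_x (~~ bit x j)%:R).
Proof.
apply/matrixP => x y; rewrite /site_op [LHS]mxE subN_Nmat !mxE.
have [<-|nxy] := eqVneq x y.
  rewrite eqxx /= mulr1n.
  have -> : [forall k : 'I_n, ((k : nat) != j) ==> (bit x k == bit x k)].
    by apply/forallP => k; rewrite eqxx implybT.
  by rewrite mulr1; case: (bit x j); rewrite /b2o /= inordK.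
rewrite mulr0n.
have [hb|hb] := eqVneq (bit x j) (bit y j).
  case: forallP => hf; last by rewrite mulr0.
  case/negP: nxy; apply/eqP/bit_inj => k.
  have [kj|kj] := eqVneq (k : nat) j; first by rewrite kj.
  by move: (hf k); rewrite kj /= => /eqP.
have -> : (b2o (bit x j) == b2o (bit y j)) = false.
  by apply/negbTE; apply: contra hb => /eqP /b2o_inj ->.
by rewrite /= mul0r.
Qed.

Lemma prod_diag_bool N (I : Type) (r : seq I) (P : pred I) (f : I -> 'I_N -> bool) :
  \prod_(j <- r | P j) diag_mx (\row_x (f j x)%:R : 'rV[C]_N)
  = diag_mx (\row_x (all (fun j => P j ==> f j x) r)%:R).
Proof.
elim: r => [|i r IH].
  by rewrite big_nil; apply/matrixP => x y; rewrite !mxE /=; case: (x == y).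
rewrite big_cons /=; case: (P i) => //=.
rewrite IH -mulmxE mulmx_diag; congr diag_mx; apply/rowP => x; rewrite !mxE.
by rewrite -natrM mulnb.
Qed.

Variables (a : int) (n : nat).
Local Notation M := ('M[C]_(2 ^ n)).
Implicit Types (S X : int -> bool) (A B T : M).

Lemma Pplus_diag (B : int -> bool) :
  Pplus a n B = diag_mx (\row_x [forall j : 'I_n, B (a + (j : nat)%:Z) ==> ~~ bit x j]%:R) :> M.
Proof.
rewrite /Pplus (eq_bigr (fun j : 'I_n => diag_mx (\row_x (~~ bit x j)%:R))); last first.
  by move=> j _; rewrite site_op_subN_Nmat.
rewrite prod_diag_bool; congr diag_mx; apply/rowP => x; rewrite !mxE.
congr (_ %:R); congr nat_of_bool; apply/idP/idP => [/allP h|/forallP h].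
  by apply/forallP => j; apply: h; rewrite mem_index_enum.
by apply/allP => j _; apply: h.
Qed.

Lemma PplusU (B1 B2 : int -> bool) :
  Pplus a n (fun x => B1 x || B2 x) = Pplus a n B1 *m Pplus a n B2 :> M.
Proof.
rewrite !Pplus_diag mulmx_diag; congr diag_mx; apply/rowP => x; rewrite !mxE.
rewrite -natrM mulnb; congr (_ %:R); congr nat_of_bool.
apply/forallP/andP => [h|[/forallP h1 /forallP h2] j].
  by split; apply/forallP => j; apply/implyP => hj; apply: (implyP (h j)); rewrite hj ?orbT.
by apply/implyP => /orP [/(implyP (h1 j))|/(implyP (h2 j))].
Qed.

Lemma Pminus_pred0 (B : int -> bool) : (forall x, B x = false) -> Pminus a n B = 0 :> M.
Proof.
move=> hB; apply/eqP; rewrite /Pminus subr_eq0; apply/eqP.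
rewrite Pplus_diag; apply/matrixP => x y; rewrite !mxE.
have -> // : [forall j : 'I_n, B (a + (j : nat)%:Z) ==> ~~ bit x j].
by apply/forallP => j; rewrite hB.
Qed.

Definition occ_diag (S : int -> bool) (A : M) := exists g : (nat -> bool) -> bool,
  A = diag_mx (\row_x (g (restr a n S x))%:R).

Lemma restrE S (x : 'I_(2 ^ n)) (j : 'I_n) :
  S (a + (j : nat)%:Z) -> restr a n S x j = bit x j.
Proof. by move=> h; rewrite /restr ltn_ord h. Qed.

Lemma occ_diag_Pplus S (B : int -> bool) :
  (forall j : 'I_n, B (a + (j : nat)%:Z) -> S (a + (j : nat)%:Z)) ->
  occ_diag S (Pplus a n B).
Proof.
move=> hBS; exists (fun r => [forall j : 'I_n, B (a + (j : nat)%:Z) ==> ~~ r j]).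
rewrite Pplus_diag; congr diag_mx; apply/rowP => x; rewrite !mxE.
congr (_ %:R); congr nat_of_bool; apply: eq_forallb => j.
by case hB: (B _) => //=; rewrite restrE // hBS.
Qed.

Lemma occ_diag1 S : occ_diag S 1%:M.
Proof.
by exists (fun _ => true); apply/matrixP => x y; rewrite !mxE; case: (x == y).
Qed.

Lemma occ_diagM S A B : occ_diag S A -> occ_diag S B -> occ_diag S (A *m B).
Proof.
move=> [f ->] [g ->]; exists (fun r => f r && g r).
rewrite mulmx_diag; congr diag_mx; apply/rowP => x; rewrite !mxE.
by rewrite -natrM mulnb.
Qed.

Lemma occ_diag_subr S A : occ_diag S A -> occ_diag S (1%:M - A).
Proof.
move=> [f ->]; exists (fun r => ~~ f r).
rewrite -diag_const_mx -raddfB /=; congr diag_mx; apply/rowP => x; rewrite !mxE.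
by case: (f _); rewrite ?subrr ?subr0.
Qed.

Lemma occ_diag_prod S (I : Type) (r : seq I) (P : pred I) (F : I -> M) :
  (forall i, P i -> occ_diag S (F i)) -> occ_diag S (\prod_(i <- r | P i) F i).
Proof.
move=> h; apply: big_ind => //; first exact: occ_diag1.
by move=> A B hA hB; rewrite -mulmxE; apply: occ_diagM.
Qed.

Lemma occ_diag_comm S1 S2 A B : occ_diag S1 A -> occ_diag S2 B -> A *m B = B *m A.
Proof.
move=> [f ->] [g ->]; rewrite !mulmx_diag; congr diag_mx; apply/rowP => x.
by rewrite !mxE mulrC.
Qed.

Lemma occ_diag_idem S A : occ_diag S A -> A *m A = A.
Proof.
move=> [f ->]; rewrite mulmx_diag; congr diag_mx; apply/rowP => x.
by rewrite !mxE -natrM mulnb andbb.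
Qed.

Lemma Pplus_comm (B1 B2 : int -> bool) :
  Pplus a n B1 *m Pplus a n B2 = Pplus a n B2 *m Pplus a n B1 :> M.
Proof. by apply: (@occ_diag_comm predT predT); apply: occ_diag_Pplus. Qed.

Lemma supported_comm X S T A : supported a n X T -> occ_diag S A ->
  (forall j : 'I_n, S (a + (j : nat)%:Z) -> ~~ X (a + (j : nat)%:Z)) -> T *m A = A *m T.
Proof.
move=> [F hF] [g ->] hSX; rewrite mul_mx_diag mul_diag_mx; apply/matrixP => x y.
rewrite !mxE hF.
case hag: (agree_off a n X x y); last by rewrite !mulr0 mul0r.
suff -> : restr a n S x = restr a n S y by rewrite mulrC.
apply/funext => j; rewrite /restr.
case: (ltnP j n) => hj //=; case hSj: (S _) => //=.
move/forallP: hag => /(_ (Ordinal hj)) /=.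
by rewrite (hSX (Ordinal hj) hSj) => /eqP.
Qed.

Lemma supported_mulmx X S T A : supported a n X T -> occ_diag S A ->
  (forall j : 'I_n, X (a + (j : nat)%:Z) -> S (a + (j : nat)%:Z)) ->
  supported a n S (T *m A).
Proof.
move=> [F hF] [g ->] hXS.
pose pr (r : nat -> bool) := fun j : nat => r j && X (a + j%:Z).
pose Q (r1 r2 : nat -> bool) :=
  [forall j : 'I_n, (S (a + (j : nat)%:Z) && ~~ X (a + (j : nat)%:Z)) ==> (r1 j == r2 j)].
exists (fun r1 r2 => F (pr r1) (pr r2) * (Q r1 r2 && g r2)%:R).
move=> x y; rewrite mul_mx_diag !mxE hF.
have prE z : pr (restr a n S z) = restr a n X z.
  apply/funext => j; rewrite /pr /restr.
  case: (ltnP j n) => hj //=; case hXj: (X _); rewrite ?andbF //.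
  by rewrite (hXS (Ordinal hj) hXj) andbT.
rewrite !prE -!mulrA; congr (_ * _).
rewrite -!natrM !mulnb; congr (_ %:R); congr nat_of_bool.
have -> : agree_off a n X x y = agree_off a n S x y && Q (restr a n S x) (restr a n S y).
  apply/forallP/andP => [h|[/forallP h1 /forallP h2] j].
    split; apply/forallP => j.
      apply/implyP => hS; have := h j; rewrite implybE.
      by case hX: (X _) => //=; rewrite (hXS j hX) in hS.
    apply/implyP => /andP [hS hX]; rewrite !restrE //.
    by have := h j; rewrite hX.
  apply/implyP => hX.
  case hS: (S (a + (j : nat)%:Z)).
    by have := h2 j; rewrite hS hX /= !restrE.
  by have := h1 j; rewrite hS.
by rewrite [in RHS]andbC andbA.
Qed.

End OccupationBasis.

Arguments occ_diag {R} a n S A.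

Section Intervals.
Variables (a : int) (n : nat).

Lemma inL_site z : inL a n z -> exists j : 'I_n, z = a + (j : nat)%:Z.
Proof.
rewrite /inL => /andP [h1 h2].
have hj : (absz (z - a) < n)%N by lia.
by exists (Ordinal hj) => /=; lia.
Qed.

Lemma nbhd_interval (p q : int) (M : int -> bool) s x :
  (forall y, M y -> (p <= y) && (y <= q)) ->
  nbhd a n M s x -> [&& inL a n x, p - s%:Z <= x & x <= q + s%:Z].
Proof.
move=> hM /andP [hx /existsP [j /andP [hMj hd]]].
by move: (hM _ hMj); rewrite /zdist in hd; rewrite hx /=; lia.
Qed.

Lemma interval_nbhd (p q : int) (M : int -> bool) s x :
  (forall y, (p <= y) && (y <= q) -> M y) ->
  (forall y, (p <= y) && (y <= q) -> inL a n y) ->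
  p <= q -> [&& inL a n x, p - s%:Z <= x & x <= q + s%:Z] -> nbhd a n M s x.
Proof.
move=> hM hL hpq /and3P [hx h1 h2]; rewrite /nbhd hx /=.
pose z := if x < p then p else if q < x then q else x.
have hz : (p <= z) && (z <= q) by rewrite /z; case: ifP => h; [|case: ifP => h']; lia.
have [j hj] := inL_site (hL _ hz).
apply/existsP; exists j; rewrite -hj hM //= /zdist.
by move: hz; rewrite /z; case: ifP => h; [|case: ifP => h']; lia.
Qed.

Lemma bd_interval (p q : int) (M : int -> bool) t x :
  (forall y, M y = (p <= y) && (y <= q)) ->
  (forall y, (p <= y) && (y <= q) -> inL a n y) ->
  bd a n M t x -> [&& inL a n x, p - t%:Z <= x, x <= q + t%:Z &
                   (x <= p + t%:Z - 1) || (q - t%:Z + 1 <= x)].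
Proof.
move=> hM hL /orP [/andP [hMx /existsP [j /andP [hMj hd]]]|/andP [hN hMx]].
  have -> : inL a n x by apply: hL; rewrite -hM.
  by move: hMx hMj hd; rewrite !hM /zdist; lia.
have hMpq y : M y -> (p <= y) && (y <= q) by rewrite hM.
have /and3P [-> h1 h2] := nbhd_interval hMpq hN.
by rewrite h1 h2 /=; move: hMx; rewrite hM; lia.
Qed.

Lemma interval_bd (p q : int) (M : int -> bool) t x :
  (forall y, M y = (p <= y) && (y <= q)) ->
  (forall y, (p - 1 <= y) && (y <= q + 1) -> inL a n y) ->
  p <= q -> (0 < t)%N ->
  [&& inL a n x, p - t%:Z <= x, x <= q + t%:Z &
      (x <= p + t%:Z - 1) || (q - t%:Z + 1 <= x)] ->
  bd a n M t x.
Proof.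
move=> hM hL hpq ht /and4P [hx h1 h2 h3].
have [hMx|hMx] := boolP (M x).
  apply/orP; left; rewrite /bd_in hMx /=.
  move: hMx; rewrite hM => hMx.
  (* a point of [M] near its boundary is close to one of the sites [p - 1], [q + 1] *)
  have [hle|hge] := boolP (x <= p + t%:Z - 1).
    have [j hj] := inL_site (hL (p - 1) ltac:(lia)).
    by apply/existsP; exists j; rewrite -hj hM /zdist; lia.
  have [j hj] := inL_site (hL (q + 1) ltac:(lia)).
  by apply/existsP; exists j; rewrite -hj hM /zdist; lia.
apply/orP; right; rewrite /bd_out hMx andbT.
apply: (@interval_nbhd p q) => //.
- by move=> y; rewrite hM.
- by move=> y hy; apply: hL; lia.
by rewrite hx h1 h2.
Qed.

Lemma card_site_eq_le1 (v : int) : (#|[set j : 'I_n | (a + (j : nat)%:Z)%R == v]| <= 1)%N.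
Proof.
apply/card_le1_eqP => x y; rewrite !inE => /eqP hx /eqP hy.
by apply/val_inj => /=; lia.
Qed.

End Intervals.

Section Norms.
Variable R : realType.
Local Notation C := (R[i]).

Lemma cabsE (z : C) : `|z| = (cabs z)%:C%C.
Proof. by rewrite /cabs normc_def. Qed.

Lemma cabs_ge0 (z : C) : 0 <= cabs z.
Proof. by rewrite -ler0c -cabsE normr_ge0. Qed.

Lemma cabsM (z w : C) : cabs (z * w) = cabs z * cabs w.
Proof. by apply: complexI; rewrite rmorphM -!cabsE normrM. Qed.

Lemma cabs_sum_le {I : finType} (f : I -> C) : cabs (\sum_i f i) <= \sum_i cabs (f i).
Proof.
have e : \sum_i `|f i| = (\sum_i cabs (f i))%:C%C.
  by rewrite rmorph_sum; apply: eq_bigr => i _; rewrite cabsE.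
by rewrite -lecR -cabsE -e ler_norm_sum.
Qed.

Lemma cabs_eq0 (z : C) : cabs z = 0 -> z = 0.
Proof. by move=> h; apply/eqP; rewrite -normr_eq0 cabsE h. Qed.

Lemma cabs_nat (m : nat) : cabs (m%:R : C) = m%:R.
Proof. by apply: complexI; rewrite -cabsE normr_nat rmorph_nat. Qed.

Definition vnorm2 {N} (v : 'cV[C]_N) := \sum_i cabs (v i 0) ^+ 2.

Lemma vnorm2_ge0 {N} (v : 'cV[C]_N) : 0 <= vnorm2 v.
Proof. by apply: sumr_ge0 => i _; rewrite exprn_ge0 // cabs_ge0. Qed.

Lemma vnorm2E {N} (v : 'cV[C]_N) : (vnorm2 v)%:C%C = ((map_mx conjC v)^T *m v) 0 0.
Proof.
have sumC (F : 'I_N -> R) : ((\sum_i F i)%:C%C : C) = \sum_i (F i)%:C%C.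
  by rewrite rmorph_sum.
have sqrC (x : R) : ((x ^+ 2)%:C%C : C) = x%:C%C ^+ 2 by rewrite rmorphXn.
rewrite /vnorm2 sumC !mxE; apply: eq_bigr => i _.
by rewrite sqrC -cabsE normCK !mxE mulrC.
Qed.

Lemma vnorm_unitary {N} (U : 'M[C]_N) (v : 'cV[C]_N) :
  (map_mx conjC U)^T *m U = 1%:M -> vnorm (U *m v) = vnorm v.
Proof.
move=> hU; rewrite /vnorm; congr Num.sqrt.
apply: complexI; rewrite -/(vnorm2 _) -/(vnorm2 _) !vnorm2E.
by rewrite map_mxM trmx_mul -mulmxA (mulmxA _ U) hU mul1mx.
Qed.

Lemma vnorm_ge0 {N} (v : 'cV[C]_N) : 0 <= vnorm v.
Proof. exact: sqrtr_ge0. Qed.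

Lemma vnorm0 {N} : vnorm (0 : 'cV[C]_N) = 0.
Proof. by rewrite /vnorm big1 ?sqrtr0 // => i _; rewrite mxE /cabs normr0 expr0n. Qed.

Lemma vnorm_eq0 {N} (v : 'cV[C]_N) : vnorm v = 0 -> v = 0.
Proof.
move/eqP; rewrite sqrtr_eq0 => h.
have h0 : vnorm2 v = 0 by apply/eqP; rewrite eq_le h vnorm2_ge0.
apply/matrixP => i j; rewrite ord1 mxE.
have := psumr_eq0P (fun i _ => exprn_ge0 2 (cabs_ge0 (v i 0))) h0 => /(_ i isT).
by move/eqP; rewrite expf_eq0 /= => /eqP /cabs_eq0.
Qed.

Lemma vnormZ {N} (c : C) (v : 'cV[C]_N) : vnorm (c *: v) = cabs c * vnorm v.
Proof.
rewrite /vnorm -(ger0_norm (cabs_ge0 c)) -sqrtr_sqr -sqrtrM ?exprn_ge0 ?cabs_ge0 //.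
congr Num.sqrt; rewrite mulr_sumr; apply: eq_bigr => i _.
by rewrite mxE cabsM exprMn.
Qed.

Lemma cabs_le_vnorm {N} (v : 'cV[C]_N) j : cabs (v j 0) <= vnorm v.
Proof.
rewrite -(ger0_norm (cabs_ge0 _)) -sqrtr_sqr ler_sqrt ?vnorm2_ge0 //.
rewrite /vnorm2 (bigD1 j) //= lerDl.
by apply: sumr_ge0 => i _; rewrite exprn_ge0 // cabs_ge0.
Qed.

Lemma vnorm_le_sum_cabs {N} (v : 'cV[C]_N) : vnorm v <= \sum_i cabs (v i 0).
Proof.
set S := \sum_i _.
have hS : 0 <= S by apply: sumr_ge0 => i _; apply: cabs_ge0.
rewrite /vnorm -(ger0_norm hS) -sqrtr_sqr ler_sqrt ?exprn_ge0 //.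
rewrite expr2 mulr_suml; apply: ler_sum => i _.
rewrite expr2 ler_wpM2l ?cabs_ge0 // /S (bigD1 i) //= lerDl.
by apply: sumr_ge0 => j _; apply: cabs_ge0.
Qed.

Lemma vnorm_diag_le {N} (d : 'rV[C]_N) (v : 'cV[C]_N) :
  (forall i, cabs (d 0 i) <= 1) -> vnorm (diag_mx d *m v) <= vnorm v.
Proof.
move=> hd; rewrite /vnorm ler_sqrt ?vnorm2_ge0 //; apply: ler_sum => i _.
rewrite mul_diag_mx mxE cabsM exprMn ler_piMl ?exprn_ge0 ?cabs_ge0 //.
by rewrite exprn_ile1 ?cabs_ge0.
Qed.

Lemma vnorm_mulmx_le_entries {N} (A : 'M[C]_N) (v : 'cV[C]_N) :
  vnorm v <= 1 -> vnorm (A *m v) <= \sum_i \sum_j cabs (A i j).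
Proof.
move=> hv; apply: le_trans (vnorm_le_sum_cabs _) _; apply: ler_sum => i _.
rewrite mxE; apply: le_trans (cabs_sum_le _) _; apply: ler_sum => j _.
rewrite cabsM ler_piMr ?cabs_ge0 //.
exact: le_trans (cabs_le_vnorm _ _) hv.
Qed.

Lemma has_sup_opnorm {N} (A : 'M[C]_N) :
  has_sup [set vnorm (A *m v) | v in [set v : 'cV[C]_N | vnorm v <= 1]].
Proof.
split; first by exists (vnorm (A *m 0)), 0 => //=; rewrite vnorm0.
by exists (\sum_i \sum_j cabs (A i j)) => _ [v hv <-]; apply: vnorm_mulmx_le_entries.
Qed.

Lemma vnorm_mulmx_le_opnorm {N} (A : 'M[C]_N) v :
  vnorm v <= 1 -> vnorm (A *m v) <= opnorm A.
Proof. by move=> hv; apply: (sup_upper_bound (has_sup_opnorm A)); exists v. Qed.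

Lemma opnorm_le {N} (A : 'M[C]_N) r :
  (forall v, vnorm v <= 1 -> vnorm (A *m v) <= r) -> opnorm A <= r.
Proof.
move=> h; apply: ge_sup; first by case: (has_sup_opnorm A).
by move=> _ [v hv <-]; apply: h.
Qed.

Lemma opnorm_ge0 {N} (A : 'M[C]_N) : 0 <= opnorm A.
Proof. by have := @vnorm_mulmx_le_opnorm N A 0; rewrite mulmx0 vnorm0; apply. Qed.

Lemma opnorm0 {N} : opnorm (0 : 'M[C]_N) = 0.
Proof.
apply/le_anti; rewrite opnorm_ge0 andbT.
by apply: opnorm_le => v _; rewrite mul0mx vnorm0.
Qed.

Lemma vnorm_mulmx_le {N} (A : 'M[C]_N) v : vnorm (A *m v) <= opnorm A * vnorm v.
Proof.
have [h0|hn] := eqVneq (vnorm v) 0.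
  by rewrite h0 (vnorm_eq0 h0) mulmx0 mulr0 vnorm0.
have hp : 0 < vnorm v by rewrite lt_neqAle eq_sym hn vnorm_ge0.
have hc : cabs (((vnorm v)^-1)%:C%C : C) = (vnorm v)^-1.
  by apply: complexI; rewrite -cabsE ger0_norm // ler0c invr_ge0 vnorm_ge0.
have := @vnorm_mulmx_le_opnorm N A (((vnorm v)^-1)%:C%C *: v).
rewrite -scalemxAr !vnormZ hc mulVf // lexx => /(_ isT).
by rewrite ler_pdivrMl // mulrC.
Qed.

Lemma opnorm_conjby_le {N} (P Q T : 'M[C]_N) :
  adj P = P -> (forall v, vnorm (P *m v) <= vnorm v) -> opnorm T <= 1 ->
  opnorm (conjby P (Q *m T)) <= opnorm (P *m Q).
Proof.
move=> hadj hP hT; apply: opnorm_le => v hv.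
have -> : conjby P (Q *m T) *m v = (P *m Q) *m (T *m (P *m v)).
  by rewrite /conjby hadj !mulmxA.
apply: le_trans (vnorm_mulmx_le _ _) _.
rewrite -[leRHS]mulr1; apply: ler_wpM2l; first exact: opnorm_ge0.
apply: le_trans (vnorm_mulmx_le _ _) _.
rewrite -(mulr1 1); apply: ler_pM => //; [exact: opnorm_ge0|exact: vnorm_ge0|].
exact: le_trans (hP v) hv.
Qed.

Section SpectralProjection.
Variables (N : nat) (H : 'M[C]_N) (c : R).
Let U := spectralmx H.
Let D := diag_mx (\row_i (((spectral_diag H 0 i <= c%:C%C)%R : bool)%:R) : 'rV[C]_N).

Let adjU : (map_mx conjC U)^T = invmx U.
Proof. by rewrite invmx_unitary ?spectral_unitarymx // map_trmx. Qed.

Let adj_invU : (map_mx conjC (invmx U))^T = U.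
Proof.
rewrite invmx_unitary ?spectral_unitarymx // -map_mx_comp map_mx_id ?trmxK //.
exact: conjCK.
Qed.

Lemma adj_specproj_le : adj (specproj_le H c) = specproj_le H c.
Proof.
have adjD : (map_mx conjC D)^T = D.
  rewrite /D map_diag_mx tr_diag_mx; congr diag_mx; apply/rowP => i; rewrite !mxE.
  by case: (spectral_diag _ _ _ <= _)%R; rewrite /= ?rmorph0 ?rmorph1.
by rewrite /adj /specproj_le -/U -/D !map_mxM !trmx_mul adj_invU adjD adjU mulmxA.
Qed.

Lemma specproj_le_contraction v : vnorm (specproj_le H c *m v) <= vnorm v.
Proof.
have unitU : U \in unitmx by rewrite unitarymx_unit ?spectral_unitarymx.
rewrite /specproj_le -/U -/D -!mulmxA vnorm_unitary; last by rewrite adj_invU mulmxV.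
rewrite -[leRHS](@vnorm_unitary _ U); last by rewrite adjU mulVmx.
apply: vnorm_diag_le => i; rewrite mxE.
by case: (spectral_diag _ _ _ <= _)%R; rewrite ?cabs_nat ?ler01 ?lexx.
Qed.

End SpectralProjection.
End Norms.

Section Expectation.
Variables (R : realType) (mu : probability R R).
Local Open Scope ereal_scope.

(* No measurability is needed: the integral of a nonnegative function is a
   supremum over the simple functions below it. *)
Lemma le_integral_nonneg (f g : R -> \bar R) : (forall x, 0 <= f x) ->
  (forall x, f x <= g x) -> \int[mu]_x f x <= \int[mu]_x g x.
Proof.
move=> f0 fg; have g0 x : 0 <= g x by apply: le_trans (fg x).
rewrite !ge0_integralE //.
apply: ge_ereal_sup => _ [h hf <-]; apply: ereal_sup_ubound; exists h => //= x.
by apply: le_trans (hf x) _; rewrite /patch /=; case: ifP.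
Qed.

Lemma Eiid_ge0 n (f : (nat -> R) -> \bar R) : (forall w, 0 <= f w) -> 0 <= Eiid mu n f.
Proof.
elim: n f => [|n IH] f f0 /=; first exact: f0.
by apply: integral_ge0 => x _; apply: IH.
Qed.

Lemma Eiid_le n (f g : (nat -> R) -> \bar R) : (forall w, 0 <= f w) ->
  (forall w, f w <= g w) -> Eiid mu n f <= Eiid mu n g.
Proof.
elim: n f g => [|n IH] f g f0 fg /=; first exact: fg.
apply: le_integral_nonneg => x; first by apply: Eiid_ge0.
by apply: IH.
Qed.

Lemma Eiid0 n : Eiid mu n (fun _ => 0) = 0.
Proof.
elim: n => [|n IH] //=.
by rewrite (eq_integral (fun _ => 0)) ?integral0 // => x _; rewrite IH.
Qed.

End Expectation.

Section Shells.
Variables (a : int) (n k l : nat) (b c : int).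
Let X x := (b <= x) && (x <= c).
Hypothesis l_gt0 : (0 < l)%N.
Hypothesis X_inL : forall x, X x -> inL a n x.
Hypothesis X_far : forall x y, X x -> ~~ inL a n y -> (9 * k.+1 * l + 1 < zdist x y)%N.

Definition shell j := bd a n (nbhd a n X (9 * j * l)) (3 * l).

Lemma inL_near_X (hbc : b <= c) y :
  b - (9 * k.+1 * l + 1)%N%:Z <= y -> y <= c + (9 * k.+1 * l + 1)%N%:Z -> inL a n y.
Proof.
move=> h1 h2; apply/negPn/negP => hy.
have hyX : ~~ X y by apply: contra hy; apply: X_inL.
have hb := X_far (ltac:(rewrite /X; lia) : X b) hy.
have hc := X_far (ltac:(rewrite /X; lia) : X c) hy.
by move: hb hc hyX; rewrite /X /zdist; lia.
Qed.

Lemma nbhd_XE (hbc : b <= c) j : (j <= k.+1)%N -> forall x,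
  nbhd a n X (9 * j * l) x = (b - (9 * j * l)%N%:Z <= x) && (x <= c + (9 * j * l)%N%:Z).
Proof.
move=> hj x; have hjl : (9 * j * l <= 9 * k.+1 * l)%N by nia.
apply/idP/idP; first by case/(@nbhd_interval a n b c)/and3P => // _ -> ->.
move=> h; apply: (@interval_nbhd a n b c) => //.
by rewrite h andbT; apply: inL_near_X; lia.
Qed.

Lemma shell_empty (hcb : c < b) j x : shell j x = false.
Proof.
have nbhd0 s y : nbhd a n X s y = false.
  by apply/negbTE/negP => /andP [_ /existsP [i /andP [h _]]]; move: h; rewrite /X; lia.
rewrite /shell /bd /bd_in /bd_out nbhd0 /=.
by apply/negbTE/negP => /andP [/andP [_ /existsP [i /andP [h _]]] _]; rewrite nbhd0 in h.
Qed.

Lemma shellE (hbc : b <= c) j : (1 <= j <= k.+1)%N -> forall x,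
  shell j x = [&& inL a n x, b - (9 * j * l)%N%:Z - (3 * l)%N%:Z <= x,
                 x <= c + (9 * j * l)%N%:Z + (3 * l)%N%:Z &
                 (x <= b - (9 * j * l)%N%:Z + (3 * l)%N%:Z - 1) ||
                 (c + (9 * j * l)%N%:Z - (3 * l)%N%:Z + 1 <= x)].
Proof.
move=> /andP [hj1 hj] x.
have hjl : (9 * j * l <= 9 * k.+1 * l)%N by nia.
have hM := nbhd_XE hbc hj.
have hL y : (b - (9 * j * l)%N%:Z - 1 <= y) && (y <= c + (9 * j * l)%N%:Z + 1) -> inL a n y.
  by move=> hy; apply: inL_near_X; lia.
apply/idP/idP; first by apply: bd_interval hM _ => y hy; apply: hL; lia.
by apply: interval_bd hM _ _ _ => //; lia.
Qed.

Lemma shell_notX j : (1 <= j <= k.+1)%N -> forall x, shell j x -> ~~ X x.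
Proof.
move=> hj x; have [hbc|hcb] := leP b c; last by rewrite shell_empty.
have h9 : (9 * l <= 9 * j * l)%N by case/andP: hj => ? ?; nia.
by rewrite shellE // /X; lia.
Qed.

Lemma shell_range j : (1 <= j <= k.+1)%N -> forall x, shell j x ->
  [&& inL a n x, b - (9 * j * l + 3 * l)%N%:Z <= x & x <= c + (9 * j * l + 3 * l)%N%:Z].
Proof.
move=> hj x; have [hbc|hcb] := leP b c; last by rewrite shell_empty.
by rewrite shellE //; lia.
Qed.

Lemma shell_far i i' : (1 <= i)%N -> (i < i')%N -> (i' <= k.+1)%N -> forall x y,
  shell i x -> shell i' y -> (2 * l + 1 <= zdist x y)%N.
Proof.
move=> hi hii hi' x y; have [hbc|hcb] := leP b c; last by rewrite shell_empty.
have h9 : (9 * i * l + 9 * l <= 9 * i' * l)%N by nia.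
rewrite !shellE ?hi ?hi' ?(ltnW hii) ?(leq_trans hi (ltnW hii)) //=; last first.
  exact: leq_trans (ltnW hii) hi'.
by rewrite /zdist; lia.
Qed.

Lemma X_sub_nbhd s x : X x -> nbhd a n X s x.
Proof.
move=> hx; apply: (@interval_nbhd a n b c) => //; first by move: hx; rewrite /X; lia.
by rewrite X_inL //=; move: hx; rewrite /X; lia.
Qed.

Lemma shell_sub_nbhd i s : (1 <= i <= k.+1)%N -> (9 * i * l + 3 * l <= s)%N ->
  forall x, shell i x -> nbhd a n X s x.
Proof.
move=> hi hs x hx; have [hbc|hcb] := leP b c; last by rewrite shell_empty in hx.
have /and3P [h1 h2 h3] := shell_range hi hx.
by apply: (@interval_nbhd a n b c) => //; rewrite h1 /=; lia.
Qed.

Lemma shells_inL (i : 'I_k.+1) x : shell i.+1 x -> inL a n x.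
Proof. by move/(shell_range (j := i.+1) (ltn_ord i))/and3P => []. Qed.

Lemma shells_nonempty (hbc : b <= c) (i : 'I_k.+1) : exists x, shell i.+1 x.
Proof.
exists (b - (9 * i.+1 * l)%N%:Z - 1).
have hjl : (9 * i.+1 * l <= 9 * k.+1 * l)%N by have := ltn_ord i; nia.
by rewrite shellE ?ltn_ord // inL_near_X //; lia.
Qed.

Lemma shells_far (i i' : 'I_k.+1) : i != i' -> forall x y,
  shell i.+1 x -> shell i'.+1 y -> (2 * l + 1 <= zdist x y)%N.
Proof.
move=> neq_ii' x y hx hy; have [lt_ii'|lt_i'i|eq_ii'] := ltngtP i i'.
- exact: shell_far hx hy.
- by rewrite /zdist distnC; apply: shell_far hy hx.
- by rewrite (val_inj eq_ii') eqxx in neq_ii'.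
Qed.

(* The left end points of the maximal subintervals of a shell are among the
   left ends [v2], [v3] of its two intervals and the left end [a] of [Lambda]. *)
Lemma Upsilon_shell_le3 j : (1 <= j <= k.+1)%N -> (Upsilon a n (shell j) <= 3)%N.
Proof.
move=> hj; have [hbc|hcb] := leP b c; last first.
  rewrite /Upsilon (_ : [set _ | _] = finset.set0) ?cards0 //.
  by apply/setP => x; rewrite !inE shell_empty.
pose v2 := b - (9 * j * l)%N%:Z - (3 * l)%N%:Z.
pose v3 := c + (9 * j * l)%N%:Z - (3 * l)%N%:Z + 1.
apply: (@leq_trans #|[set i : 'I_n | a + (i : nat)%:Z == a] :|:
   [set i : 'I_n | a + (i : nat)%:Z == v2] :|: [set i : 'I_n | a + (i : nat)%:Z == v3]|).
  apply: subset_leq_card; apply/fintype.subsetP => x; rewrite !inE !shellE //.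
  by case/andP; rewrite /inL /v2 /v3; lia.
apply: leq_trans (leq_card_setU _ _).1 _.
rewrite (_ : 3 = 2 + 1)%N //; apply: leq_add (card_site_eq_le1 _ _ _).
apply: leq_trans (leq_card_setU _ _).1 _.
exact: leq_add (card_site_eq_le1 _ _ _) (card_site_eq_le1 _ _ _).
Qed.

Lemma max_Upsilon_shells_le3 : (\max_(i < k.+1) Upsilon a n (shell i.+1) <= 3)%N.
Proof. by apply/bigmax_leqP => i _; apply: Upsilon_shell_le3; rewrite ltn_ord. Qed.

Variables (R : realType) (T : 'M[R[i]]_(2 ^ n)).
Hypothesis T_supp : supported a n X T.

Definition Pbelow j : 'M[R[i]]_(2 ^ n) := \prod_(1 <= i < j) Pminus a n (shell i).
Definition Tpart j := T *m Pplus a n (shell j) *m Pbelow j.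

Lemma occ_diag_shell (j : nat) : occ_diag a n predT (Pplus a n (shell j) : 'M[R[i]]_(2 ^ n)).
Proof. exact: occ_diag_Pplus. Qed.

Lemma occ_diag_Pbelow j : occ_diag a n predT (Pbelow j).
Proof. by apply: occ_diag_prod => i _; apply/occ_diag_subr/occ_diag_shell. Qed.

Lemma occ_diag_shell_offX j : (1 <= j <= k.+1)%N ->
  occ_diag a n (fun x => ~~ X x) (Pplus a n (shell j) : 'M[R[i]]_(2 ^ n)).
Proof. by move=> hj; apply: occ_diag_Pplus => i; apply: shell_notX. Qed.

Lemma occ_diag_Pbelow_offX j : (j <= k.+2)%N -> occ_diag a n (fun x => ~~ X x) (Pbelow j).
Proof.
move=> hj; rewrite /Pbelow big_seq; apply: occ_diag_prod => i.
by rewrite mem_index_iota => hi; apply/occ_diag_subr/occ_diag_shell_offX; lia.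
Qed.

Lemma occ_diag_Pbelow_nbhd j s : (j <= k.+2)%N ->
  (forall i, (1 <= i < j)%N -> (9 * i * l + 3 * l <= s)%N) ->
  occ_diag a n (nbhd a n X s) (Pbelow j).
Proof.
move=> hj hs; rewrite /Pbelow big_seq; apply: occ_diag_prod => i.
rewrite mem_index_iota => hi; apply/occ_diag_subr/occ_diag_Pplus => x.
have hi' : (1 <= i <= k.+1)%N by lia.
exact: shell_sub_nbhd hi' (hs _ hi) _.
Qed.

Lemma T_comm A : occ_diag a n (fun x => ~~ X x) A -> T *m A = A *m T.
Proof. by move=> hA; apply: supported_comm T_supp hA _. Qed.

Lemma Tpart_conj j : (1 <= j <= k.+1)%N ->
  Tpart j = Pplus a n (shell j) *m Tpart j *m Pplus a n (shell j).
Proof.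
move=> hj; set P := Pplus a n (shell j).
have hP : occ_diag a n (fun x => ~~ X x) P := occ_diag_shell_offX hj.
have idem := occ_diag_idem hP; have cT := T_comm hP.
have cPP := occ_diag_comm (occ_diag_shell j) (occ_diag_Pbelow j).
rewrite /Tpart -/P -!mulmxA -cPP (mulmxA P P) idem.
by rewrite [RHS]mulmxA -cT -[RHS]mulmxA (mulmxA P P) idem.
Qed.

Lemma Tpart_split j : (1 <= j <= k.+1)%N ->
  Tpart j = Pplus a n (bd_out a n (nbhd a n X (9 * j * l)) (3 * l))
            *m Pplus a n (bd_in a n (nbhd a n X (9 * j * l)) (3 * l)) *m (T *m Pbelow j).
Proof.
move=> hj; rewrite /Tpart (T_comm (occ_diag_shell_offX hj)) -mulmxA.
set Nj := nbhd a n X (9 * j * l).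
have -> : Pplus a n (shell j)
    = Pplus a n (bd_in a n Nj (3 * l)) *m Pplus a n (bd_out a n Nj (3 * l)) :> 'M[R[i]]_(2 ^ n).
  exact: PplusU.
by rewrite Pplus_comm.
Qed.

Lemma supported_T_Pbelow j : (1 <= j <= k.+1)%N ->
  supported a n (nbhd a n X ((9 * j - 6) * l)) (T *m Pbelow j).
Proof.
move=> /andP [hj1 hj]; apply: supported_mulmx T_supp _ _.
  by apply: occ_diag_Pbelow_nbhd => [|i hi]; nia.
by move=> x; apply: X_sub_nbhd.
Qed.

Lemma supported_Tpart j : (1 <= j <= k.+1)%N ->
  supported a n (nbhd a n X ((9 * j + 3) * l)) (Tpart j).
Proof.
move=> hj; rewrite /Tpart -mulmxA; apply: supported_mulmx T_supp _ _; last first.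
  by move=> x; apply: X_sub_nbhd.
apply: occ_diagM.
  have hs : (9 * j * l + 3 * l <= (9 * j + 3) * l)%N by rewrite mulnDl.
  by apply: occ_diag_Pplus => x hx; exact: (shell_sub_nbhd hj hs hx).
by apply: occ_diag_Pbelow_nbhd => [|i hi]; rewrite ?mulnDl; nia.
Qed.

Lemma sum_Tpart m : (1 <= m)%N -> \sum_(1 <= j < m) Tpart j = T - T *m Pbelow m.
Proof.
elim: m => // m IH _; have [->|m_gt0] := posnP m.
  by rewrite big_geq // /Pbelow big_geq // -idmxE mulmx1 subrr.
rewrite big_nat_recr //= IH // /Tpart /Pbelow big_nat_recr //= -/(Pbelow m).
rewrite /Pminus -mulmxE mulmxBr mulmx1 mulmxBr -(mulmxA T (Pplus _ _ _)).
rewrite (occ_diag_comm (occ_diag_shell m) (occ_diag_Pbelow m)).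
by rewrite mulmxA opprB addrA [LHS]addrAC.
Qed.

Lemma Tpart_props j : (1 <= j <= k.+1)%N ->
  [/\ Tpart j = Pplus a n (shell j) *m Tpart j *m Pplus a n (shell j),
      Tpart j = Pplus a n (bd_out a n (nbhd a n X (9 * j * l)) (3 * l))
                *m Pplus a n (bd_in a n (nbhd a n X (9 * j * l)) (3 * l)) *m (T *m Pbelow j),
      supported a n (nbhd a n X ((9 * j + 3) * l)) (Tpart j) &
      supported a n (nbhd a n X ((9 * j - 6) * l)) (T *m Pbelow j)].
Proof.
move=> hj; split;
  [exact: Tpart_conj|exact: Tpart_split|exact: supported_Tpart|exact: supported_T_Pbelow].
Qed.

Lemma Pbelow_ord : Pbelow k.+2 = \prod_(i < k.+1) Pminus a n (shell i.+1).
Proof. by rewrite /Pbelow big_add1 /= big_mkord. Qed.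

Lemma Pbelow_empty : c < b -> Pbelow k.+2 = 0.
Proof.
move=> hcb; rewrite /Pbelow big_ltn // Pminus_pred0 ?mul0r // => x.
exact: shell_empty.
Qed.

Hypothesis T_le1 : opnorm T <= 1.

Lemma opnorm_conjby_remainder_le P :
  adj P = P -> (forall v, vnorm (P *m v) <= vnorm v) ->
  opnorm (conjby P (T - \sum_(1 <= j < k.+2) Tpart j)) <= opnorm (P *m Pbelow k.+2).
Proof.
move=> hadj hP.
have -> : T - \sum_(1 <= j < k.+2) Tpart j = T *m Pbelow k.+2.
  by rewrite sum_Tpart // subKr.
by rewrite (T_comm (occ_diag_Pbelow_offX (leqnn _))); apply: opnorm_conjby_le.
Qed.

End Shells.

Lemma ler_mul_nat_norm (R : realDomainType) (x : R) (m p : nat) :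
  (m <= p)%N -> x * m%:R <= p%:R * `|x|.
Proof.
move=> mp; rewrite mulrC; apply: le_trans (ler_wpM2l (ler0n _ m) (ler_norm x)) _.
by apply: ler_wpM2r; rewrite ?normr_ge0 ?ler_nat.
Qed.

Theorem lemma3p3 (R : realType) (mu : probability R R) (Delta0 lambda0 m0 : R) :
  good_law mu -> 9 < Delta0 -> 0 < lambda0 -> 0 < m0 ->
  (* m0 is a constant for which the bound of the previous lemma holds *)
  (exists Cp : nat -> R, forall k : nat, (0 < k)%N ->
     forall Delta lambda : R, Delta0 <= Delta -> lambda0 <= lambda ->
     forall (a : int) (n : nat) (l : nat), (0 < l)%N ->
     forall S : 'I_k.+1 -> (int -> bool),
       (forall i x, S i x -> inL a n x) ->
       (forall i, exists x, S i x) ->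
       (forall i i', i != i' -> forall x y, S i x -> S i' y ->
          (2 * l + 1 <= zdist x y)%N) ->
       (Eiid mu n (fun om =>
          (opnorm (specproj_le (Ham n Delta lambda om) (Ik k Delta)
                    *m \prod_(i < k.+1) Pminus a n (S i)))%:E)
        <= (Cp k * ((\max_(i < k.+1) Upsilon a n (S i))%N)%:R
              * n%:R ^+ (2 * k + 1) * expR (- (m0 * l%:R)))%:E)%E) ->
  forall k : nat, (0 < k)%N -> exists Ck : R,
  forall Delta lambda : R, Delta0 <= Delta -> lambda0 <= lambda ->
  forall (a : int) (n : nat) (b c : int) (T : 'M[R[i]]_(2 ^ n)) (l : nat),
  (0 < l)%N ->
  let X := fun x : int => (b <= x) && (x <= c) in
  (forall x, X x -> inL a n x) ->
  supported a n X T -> opnorm T <= 1 ->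
  (forall x y, X x -> ~~ inL a n y -> (9 * k.+1 * l + 1 < zdist x y)%N) ->
  let Nb := fun j : nat => nbhd a n X (9 * j * l) in
  let Pm := fun j : nat => \prod_(1 <= i < j) Pminus a n (bd a n (Nb i) (3 * l)) in
  let Tj := fun j : nat => T *m Pplus a n (bd a n (Nb j) (3 * l)) *m Pm j in
  (forall j : nat, (1 <= j <= k.+1)%N ->
     [/\ Tj j = Pplus a n (bd a n (Nb j) (3 * l)) *m Tj j
                  *m Pplus a n (bd a n (Nb j) (3 * l)),
         Tj j = Pplus a n (bd_out a n (Nb j) (3 * l))
                  *m Pplus a n (bd_in a n (Nb j) (3 * l)) *m (T *m Pm j),
         supported a n (nbhd a n X ((9 * j + 3) * l)) (Tj j) &
         supported a n (nbhd a n X ((9 * j - 6) * l)) (T *m Pm j)])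
  /\ (Eiid mu n (fun om =>
        (opnorm (conjby (specproj_le (Ham n Delta lambda om) (Ik k Delta))
                        (T - \sum_(1 <= j < k.+2) Tj j)))%:E)
      <= (Ck * n%:R ^+ (2 * k + 1) * expR (- (m0 * l%:R)))%:E)%E.
Proof.
move=> _ _ _ _ [Cp Cp_bound] k k_gt0; exists (3%:R * `|Cp k|).
move=> Delta lambda hDelta hlambda a n b c T l l_gt0 X X_inL T_supp T_le1 X_far Nb Pm Tj.
have -> : Tj = Tpart a l b c T := erefl.
have -> : Pm = Pbelow a n l b c R := erefl.
split; first by move=> j /(Tpart_props l_gt0 X_inL X_far T_supp).
pose P om := specproj_le (Ham n Delta lambda om) (Ik k Delta).
pose Q := Pbelow a n l b c R k.+2.
apply: (@le_trans _ _ (Eiid mu n (fun om => (opnorm (P om *m Q))%:E))).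
  apply: Eiid_le => om; first by rewrite lee_fin opnorm_ge0.
  have rem_le := opnorm_conjby_remainder_le l_gt0 X_inL X_far T_supp T_le1
    (adj_specproj_le (Ham n Delta lambda om) (Ik k Delta)) (specproj_le_contraction _ _).
  by rewrite lee_fin; exact rem_le.
have [hbc|hcb] := leP b c; last first.
  have -> : (fun om => (opnorm (P om *m Q))%:E) = fun => 0%E.
    by apply/funext => om; rewrite /Q Pbelow_empty // mulmx0 opnorm0.
  by rewrite Eiid0 lee_fin !mulr_ge0 ?expR_ge0 ?exprn_ge0 ?ler0n.
have := Cp_bound k k_gt0 Delta lambda hDelta hlambda a n l l_gt0 _
  (shells_inL l_gt0 X_inL X_far) (shells_nonempty l_gt0 X_inL X_far hbc)
  (shells_far l_gt0 X_inL X_far).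
rewrite /Q Pbelow_ord => /le_trans; apply; rewrite lee_fin.
rewrite !ler_wpM2r ?expR_ge0 ?exprn_ge0 ?ler0n // ler_mul_nat_norm //.
exact: max_Upsilon_shells_le3 l_gt0 X_inL X_far.
Qed.
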